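(* $H_N^{[\infty]}$ acts affinely on $S^{N-1,1}_{\mathbb R,*}$: the assignment $x_i\mapsto\sum_ju_{ij}\otimes x_j$ defines a $*$-morphism $C(S^{N-1,1}_{\mathbb R,*})\to C(H_N^{[\infty]})\otimes C(S^{N-1,1}_{\mathbb R,*})$.
   Context: $C(S^{N-1}_{\mathbb R,+})$ is the universal $C^*$-algebra generated by self-adjoint $x_1,\dots,x_N$ with $\sum x_i^2=1$; $S^{N-1,1}_{\mathbb R,*}$ is defined by $x_ix_jx_k=0$ for $i,j,k$ pairwise distinct and $x_ix_jx_k=x_kx_jx_i$ otherwise. $C(O_N^+)$ is the universal $C^*$-algebra generated by self-adjoint $u_{ij}$ with $u=(u_{ij})$ orthogonal; $C(H_N^{[\infty]})$ is its quotient by the relations $abc=0$ whenever $a,b,c$ are entries of $u$ with $a\ne c$ on the same row or the same column (i.e. $u_{ia}u_{jb}u_{ic}=0$ for $a\ne c$, $u_{ia}u_{jb}u_{ka}=0$ for $i\ne k$). *)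

From HB Require Import structures.
From mathcomp Require Import all_boot all_order all_algebra.
Set Implicit Arguments. Unset Strict Implicit. Unset Printing Implicit Defensive.
Import GRing.Theory.
Local Open Scope ring_scope.

(* An involution on a ring making it a *-ring, together with the
   C*-type property  a^* a = 0 -> a = 0  (valid in every C*-algebra). *)
Definition star_ring (T : nzRingType) (star : T -> T) : Prop :=
  [/\ involutive star,
      forall a b, star (a + b) = star a + star b,
      forall a b, star (a * b) = star b * star a,
      star 1 = 1
    & forall a, star a * a = 0 -> a = 0].

Definition half_lib_sphere_rel (T : nzRingType) (star : T -> T) (N : nat)
    (x : 'I_N -> T) : Prop :=
  [/\ forall i, star (x i) = x i,
      \sum_(i < N) x i * x i = 1,
      forall i j k : 'I_N, i != j -> j != k -> i != k ->
        x i * x j * x k = 0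
    & forall i j k : 'I_N, ~~ [&& i != j, j != k & i != k] ->
        x i * x j * x k = x k * x j * x i].

(* Defining relations of C(H_N^{[infty]}): self-adjoint entries, u orthogonal
   (u u^t = u^t u = 1), and abc = 0 for a, c distinct entries on the same
   row or the same column. *)
Definition Hinf_rel (T : nzRingType) (star : T -> T) (N : nat)
    (u : 'I_N -> 'I_N -> T) : Prop :=
  [/\ forall i j, star (u i j) = u i j,
      forall i j : 'I_N, \sum_(k < N) u i k * u j k = (i == j)%:R,
      forall i j : 'I_N, \sum_(k < N) u k i * u k j = (i == j)%:R,
      forall i j k a b c : 'I_N, i = k -> a != c ->
        u i a * u j b * u k c = 0
    & forall i j k a b c : 'I_N, a = c -> i != k ->
        u i a * u j b * u k c = 0].

From HB Require Import structures.
From mathcomp Require Import all_boot all_order all_algebra.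
Import GRing.Theory.
Local Open Scope ring_scope.

(** Write X_i = sum_j u_ij x_j.  The cubic relations of H_N^[infty] imply, by
    positivity, the quadratic ones u_ia u_ib = 0 = u_ia u_ja (a <> b, i <> j).
    For i, j, k pairwise distinct, a term u_ia u_jb u_kc x_a x_b x_c of
    X_i X_j X_k dies on the u side unless a, b, c are pairwise distinct, and
    then on the x side.  The quadratic relations also give
    X_i^2 = sum_a u_ia^2 x_a^2; inserting 1 = sum_e u_ie^2 = sum_l u_la^2 shows
    that u_ia^2 commutes with every u_kc, and x_a^2 commutes with every x_c, so
    X_i^2 commutes with every X_k, which is the remaining relation. *)

Section HinfRelations.

Context {T : nzRingType} {star : T -> T} {N : nat} {u : 'I_N -> 'I_N -> T}.
Hypothesis starT : star_ring star.
Hypothesis uH : Hinf_rel star u.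

(* For p = u_ia u_ib, p^* p = u_ib (u_ia u_ia u_ib) is killed by a cubic relation. *)
Lemma Hinf_row_mul_eq0 i a b : a != b -> u i a * u i b = 0.
Proof.
case: starT => _ _ sM _ sC; case: uH => usa _ _ rowH _ nab.
by apply: sC; rewrite sM !usa -!mulrA (mulrA (u i a)) rowH // mulr0.
Qed.

Lemma Hinf_col_mul_eq0 a i j : i != j -> u i a * u j a = 0.
Proof.
case: starT => _ _ sM _ sC; case: uH => usa _ _ _ colH nij.
by apply: sC; rewrite sM !usa -!mulrA (mulrA (u i a)) colH // mulr0.
Qed.

Lemma Hinf_mul_sqrr i a k c : u i a * u k c * u i a ^+ 2 = u i a * u k c.
Proof.
case: uH => _ urow _ rowH _.
have {urow}one_row : 1 = \sum_(e < N) u i e * u i e by rewrite urow eqxx.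
rewrite -[RHS]mulr1 one_row mulr_sumr (bigD1 a) //= expr2 mulrA.
rewrite big1 ?addr0 // => e ne.
by rewrite !mulrA rowH // ?mul0r // eq_sym.
Qed.

Lemma Hinf_sqr_mull i a k c : u i a ^+ 2 * (u k c * u i a) = u k c * u i a.
Proof.
case: uH => _ _ ucol _ colH.
have {ucol}one_col : 1 = \sum_(l < N) u l a * u l a by rewrite ucol eqxx.
rewrite -[RHS]mul1r one_col mulr_suml (bigD1 i) //= expr2.
rewrite big1 ?addr0 // => l nl.
by rewrite -mulrA (mulrA (u l a) (u k c)) colH // mulr0.
Qed.

Lemma Hinf_comm_sqr i a k c : GRing.comm (u k c) (u i a ^+ 2).
Proof.
rewrite /GRing.comm; transitivity (u i a ^+ 2 * u k c * u i a ^+ 2).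
  by rewrite [X in u k c * X]expr2 mulrA -(Hinf_sqr_mull i a k c) !mulrA.
by rewrite [X in _ = X * _]expr2 -[RHS]mulrA -(Hinf_mul_sqrr i a k c) !mulrA.
Qed.

End HinfRelations.

Definition coact {T : nzRingType} {N : nat} (u : 'I_N -> 'I_N -> T)
    (x : 'I_N -> T) (i : 'I_N) : T :=
  \sum_(j < N) u i j * x j.

Section Coaction.

Context {T : nzRingType} {star : T -> T} {N : nat}.
Context {u : 'I_N -> 'I_N -> T} {x : 'I_N -> T}.
Hypothesis starT : star_ring star.
Hypothesis uH : Hinf_rel star u.
Hypothesis xS : half_lib_sphere_rel star x.
Hypothesis ux_comm : forall i j k, u i j * x k = x k * u i j.

Local Notation X := (coact u x).

Lemma comm_entry_sphere_mul i j a b : GRing.comm (u i j) (x a * x b).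
Proof. by apply: commrM; rewrite /GRing.comm ux_comm. Qed.

Lemma coact_selfadj i : star (X i) = X i.
Proof.
case: starT => _ sD sM _ _; case: uH => usa _ _ _ _; case: xS => xsa _ _ _.
have s0 : star 0 = 0 by apply: (@addrI _ (star 0)); rewrite -sD !addr0.
rewrite /coact (big_morph star sD s0); apply: eq_bigr => j _.
by rewrite sM usa xsa ux_comm.
Qed.

Lemma coact_mul2 i j :
  X i * X j = \sum_(a < N) \sum_(b < N) u i a * u j b * (x a * x b).
Proof.
rewrite /coact big_distrl /=; apply: eq_bigr => a _.
rewrite big_distrr /=; apply: eq_bigr => b _.
by rewrite -!mulrA (mulrA (x a)) -ux_comm !mulrA.
Qed.

Lemma coact_mul3 i j k : X i * X j * X k =
  \sum_(a < N) \sum_(b < N) \sum_(c < N)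
    u i a * u j b * u k c * (x a * x b * x c).
Proof.
rewrite coact_mul2 big_distrl /=; apply: eq_bigr => a _.
rewrite big_distrl /=; apply: eq_bigr => b _.
rewrite /coact big_distrr /=; apply: eq_bigr => c _.
rewrite -!mulrA; congr (_ * (_ * _)).
by rewrite !mulrA -(comm_entry_sphere_mul k c a b) !mulrA.
Qed.

Lemma coact_sum_sqr : \sum_(i < N) X i * X i = 1.
Proof.
case: uH => _ _ ucol _ _; case: xS => _ xsum _ _.
under eq_bigr do rewrite coact_mul2.
rewrite exchange_big /= -xsum; apply: eq_bigr => a _.
rewrite exchange_big /= (bigD1 a) //= -big_distrl /= ucol eqxx mul1r.
rewrite big1 ?addr0 // => b nba.
by rewrite -big_distrl /= ucol eq_sym (negbTE nba) mul0r.
Qed.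

Lemma coact_mul3_distinct i j k :
  i != j -> j != k -> i != k -> X i * X j * X k = 0.
Proof.
case: uH => _ _ _ _ colH; case: xS => _ _ x3 _ nij njk nik.
rewrite coact_mul3; apply: big1 => a _; apply: big1 => b _; apply: big1 => c _.
have [<-|nab] := eqVneq a b; first by rewrite (Hinf_col_mul_eq0 starT uH) // !mul0r.
have [<-|nbc] := eqVneq b c.
  by rewrite -(mulrA (u i a)) (Hinf_col_mul_eq0 starT uH) // mulr0 !mul0r.
have [<-|nac] := eqVneq a c; first by rewrite colH // mul0r.
by rewrite x3 // mulr0.
Qed.

Lemma coact_sqr i : X i ^+ 2 = \sum_(a < N) u i a ^+ 2 * x a ^+ 2.
Proof.
rewrite expr2 coact_mul2; apply: eq_bigr => a _.
rewrite (bigD1 a) //= big1 ?addr0 ?expr2 // => b nba.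
by rewrite (Hinf_row_mul_eq0 starT uH) ?mul0r // eq_sym.
Qed.

(* x_a^2 commutes with x_c: the reversal relation for the triple (a, a, c). *)
Lemma coact_comm_sqr i k : GRing.comm (X k) (X i ^+ 2).
Proof.
case: xS => _ _ _ xrev.
have ux c j l : GRing.comm (u j l) (x c) by rewrite /GRing.comm ux_comm.
rewrite coact_sqr /coact; apply: commr_sum => a _; apply: commr_sym.
apply: commr_sum => c _; apply: commrM; apply: commr_sym; apply: commrM.
- exact: (Hinf_comm_sqr uH).
- exact: commrX (ux _ _ _).
- exact: commrX (commr_sym (ux _ _ _)).
- by rewrite /GRing.comm expr2 mulrA -xrev // eqxx.
Qed.

Lemma coact_mul3_rev i j k : ~~ [&& i != j, j != k & i != k] ->
  X i * X j * X k = X k * X j * X i.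
Proof.
have [<-|nij] := eqVneq i j.
  by rewrite -expr2 -mulrA -expr2 => _; symmetry; apply: coact_comm_sqr.
have [<-|njk] := eqVneq j k; first by rewrite -mulrA -expr2 => _; apply: coact_comm_sqr.
by have [<-|] := eqVneq i k.
Qed.

Lemma coact_half_lib_sphere_rel : half_lib_sphere_rel star X.
Proof.
split; [exact: coact_selfadj | exact: coact_sum_sqr |
        exact: coact_mul3_distinct | exact: coact_mul3_rev].
Qed.

End Coaction.

Theorem proposition5p2 (T : nzRingType) (star : T -> T) (N : nat)
    (u : 'I_N -> 'I_N -> T) (x : 'I_N -> T) :
  star_ring star ->
  Hinf_rel star u ->
  half_lib_sphere_rel star x ->
  (forall i j k, u i j * x k = x k * u i j) ->
  half_lib_sphere_rel star (fun i => \sum_(j < N) u i j * x j).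
Proof. exact: coact_half_lib_sphere_rel. Qed.
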